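(* For $\phi\in[-\pi,\pi]$ and $n\in\mathbb{N}$ define $$f_n(z)=\sum_{k=1}^{n}\frac{z^ke^{i(n+1-k)\phi}}{n+1-k}=\frac{ze^{in\phi}}{n}+\frac{z^2e^{i(n-1)\phi}}{n-1}+\dots+\frac{z^{n-1}e^{2i\phi}}{2}+z^ne^{i\phi}.$$ There is an absolute constant $C_0>0$ such that $\|f_n\|_{\mathcal{B}}\ge\frac{\log n}{C_0}$ for all $n\in\mathbb{N}$ and all $\phi$.
   Context: The Bloch space $\mathcal{B}$ consists of holomorphic $f$ on $\mathbb{D}$ with $\|f\|_{\mathcal{B}}=|f(0)|+\sup_{z\in\mathbb{D}}(1-|z|^2)|f'(z)|<\infty$. *)

From HB Require Import structures.
From mathcomp Require Import all_boot all_order all_algebra.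
From mathcomp Require Import complex.
From mathcomp Require Import classical_sets boolp reals trigo exp.
Set Implicit Arguments. Unset Strict Implicit. Unset Printing Implicit Defensive.
Import Order.TTheory GRing.Theory Num.Theory.
Local Open Scope ring_scope.
Local Open Scope classical_set_scope.
Local Open Scope complex_scope.

Definition cmod (R : realType) (z : R[i]) : R := Normc.normc z.

Definition cexpi (R : realType) (t : R) : R[i] := (cos t +i* sin t).

(* Bloch norm of a polynomial p (entire, hence holomorphic on the disc):
   |p(0)| + sup_{|z|<1} (1-|z|^2) |p'(z)|. For polynomials the complex
   derivative coincides with the formal derivative p^`(). *)
Definition bloch_norm (R : realType) (p : {poly R[i]}) : R :=
  cmod p.[0] +
  sup [set (1 - cmod z ^+ 2) * cmod (p^`()).[z] | z in [set z : R[i] | cmod z < 1]].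

Definition f_n (R : realType) (phi : R) (n : nat) : {poly R[i]} :=
  \sum_(1 <= k < n.+1)
     ((cexpi (((n.+1 - k)%:R : R) * phi) / (n.+1 - k)%:R) *: 'X^k).

(* At the point z = r e^{i phi} every term of f_n' has the same argument n phi, so
   |f_n'(z)| = sum_k k r^(k-1) / (n+1-k).  Taking r = 1 - 1/(2n), Bernoulli's
   inequality gives r^(k-1) >= 1/2 for k <= n, and 1 - r^2 >= 1/(2n).  Since
   sum_k k/(n+1-k) = (n+1) H_n - n, the Bloch quantity at z is at least (H_n - 1)/4,
   and H_n - 1 >= (log n)/2. *)
From HB Require Import structures.
From mathcomp Require Import all_boot all_order all_algebra.
From mathcomp Require Import complex.
From mathcomp Require Import classical_sets boolp reals trigo exp.
From mathcomp Require Import ring lra zify.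
Set Implicit Arguments. Unset Strict Implicit. Unset Printing Implicit Defensive.
Import Order.TTheory GRing.Theory Num.Theory.
Local Open Scope ring_scope.

Section ComplexPolynomials.
Local Open Scope complex_scope.
Variable R : realType.

Lemma cmod_ge0 (z : R[i]) : 0 <= cmod z.
Proof. by case: z => a b; rewrite /cmod sqrtr_ge0. Qed.

Lemma cmodM (z w : R[i]) : cmod (z * w) = cmod z * cmod w.
Proof. exact: Normc.normcM. Qed.

Lemma cmodX (z : R[i]) m : cmod (z ^+ m) = cmod z ^+ m.
Proof.
elim: m => [|m IH]; first by rewrite !expr0 /cmod Normc.normc1.
by rewrite !exprS cmodM IH.
Qed.

Lemma cmod_real (x : R) : cmod x%:C = `|x|.
Proof. by rewrite /cmod /= expr0n /= addr0 sqrtr_sqr. Qed.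

Lemma cmod_sum (I : Type) (r : seq I) (P : pred I) (F : I -> R[i]) :
  cmod (\sum_(i <- r | P i) F i) <= \sum_(i <- r | P i) cmod (F i).
Proof.
apply: (big_ind2 (fun z x => cmod z <= x)) => //; first by rewrite /cmod Normc.normc0.
by move=> z1 z2 x1 x2 h1 h2; apply: le_trans (le_normcD _ _) (lerD h1 h2).
Qed.

Lemma cexpiD (s t : R) : cexpi s * cexpi t = cexpi (s + t).
Proof. by rewrite /cexpi cosD sinD; simpc; congr (_ +i* _); ring. Qed.

Lemma cexpiX (t : R) m : cexpi t ^+ m = cexpi (m%:R * t).
Proof.
elim: m => [|m IH]; first by rewrite expr0 mul0r /cexpi cos0 sin0.
by rewrite exprS IH cexpiD -natr1 mulrDl mul1r addrC.
Qed.

Lemma cmod_cexpi (t : R) : cmod (cexpi t) = 1.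
Proof. by rewrite /cmod /cexpi /= cos2Dsin2 sqrtr1. Qed.

Lemma cmod_horner_le_sum_coef (p : {poly R[i]}) (z : R[i]) : cmod z <= 1 ->
  cmod p.[z] <= \sum_(i < size p) cmod p`_i.
Proof.
move=> z_le1; rewrite horner_coef; apply: le_trans (cmod_sum _ _ _) _.
apply: ler_sum => i _; rewrite cmodM cmodX.
rewrite -[leRHS]mulr1 ler_wpM2l ?cmod_ge0 //.
by rewrite exprn_ile1 ?cmod_ge0.
Qed.

(* The supremum in [bloch_norm] is a genuine least upper bound: for a polynomial
   the set is bounded by the sum of the moduli of the coefficients of p'. *)
Lemma bloch_norm_ge (p : {poly R[i]}) (z : R[i]) : cmod z < 1 ->
  (1 - cmod z ^+ 2) * cmod (p^`()).[z] <= bloch_norm p.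
Proof.
move=> z_lt1; rewrite /bloch_norm; set S := sup _.
suff : (1 - cmod z ^+ 2) * cmod (p^`()).[z] <= S.
  by move/le_trans; apply; rewrite lerDr cmod_ge0.
apply: ub_le_sup; last by exists z.
exists (\sum_(i < size p^`()) cmod p^`()`_i) => _ [w /= w_lt1 <-].
have := cmod_horner_le_sum_coef p^`() (ltW w_lt1).
have := cmod_ge0 (p^`()).[w]; have := sqr_ge0 (cmod w).
set a := cmod w ^+ 2; set b := cmod _; set c := \sum_(_ < _) _; nra.
Qed.

Lemma deriv_f_n_horner (phi r : R) n :
  (f_n phi n)^`().[r%:C * cexpi phi] =
  cexpi (n%:R * phi) * (\sum_(1 <= k < n.+1) k%:R * r ^+ k.-1 / (n.+1 - k)%:R)%:C.
Proof.
rewrite /f_n raddf_sum horner_sum rmorph_sum mulr_sumr.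
apply: eq_big_nat => k /andP[k_ge1 k_le_n].
rewrite /= derivZ derivXn hornerZ hornerMn hornerXn exprMn cexpiX.
rewrite !rmorphM rmorphXn fmorphV !rmorph_nat.
have <- : cexpi ((n.+1 - k)%:R * phi) * cexpi (k.-1%:R * phi) = cexpi (n%:R * phi).
  by rewrite cexpiD -mulrDl -natrD; congr (cexpi (_%:R * _)); lia.
ring.
Qed.

End ComplexPolynomials.

Lemma bernoulli_ineq (R : realDomainType) (x : R) m :
  -1 <= x -> 1 + m%:R * x <= (1 + x) ^+ m.
Proof.
move=> x_ge; have x1_ge0 : 0 <= 1 + x by lra.
elim: m => [|m IH]; first by rewrite mul0r addr0 expr0.
rewrite exprSr -natr1.
have := ler_wpM2r x1_ge0 IH; have := ler0n R m; nra.
Qed.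

Definition harmonic_number (R : fieldType) n : R := \sum_(1 <= j < n.+1) (j%:R)^-1.

Lemma sum_div_rev_nat (R : numFieldType) n :
  \sum_(1 <= k < n.+1) (k%:R / (n.+1 - k)%:R : R) =
  n.+1%:R * harmonic_number R n - n%:R.
Proof.
rewrite /harmonic_number big_nat_rev /= mulr_sumr.
have -> : n%:R = \sum_(1 <= j < n.+1) (1 : R) by rewrite sumr_const_nat subn1.
rewrite -sumrB; apply: eq_big_nat => j /andP[j_ge1 j_le_n].
rewrite (_ : 1 + n.+1 - j.+1 = n.+1 - j)%N; last by lia.
rewrite (_ : n.+1 - (n.+1 - j) = j)%N; last by lia.
have j_neq0 : (j%:R : R) != 0 by rewrite pnatr_eq0 -lt0n.
by rewrite natrB; [field | lia].
Qed.

(* Induction step: ln (1 + 1/a) <= 1/a <= 2/(a+1) for a >= 1. *)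
Lemma ln_le_harmonic_number (R : realType) n : (1 <= n)%N ->
  ln (n%:R : R) <= 2 * (harmonic_number R n - 1).
Proof.
case: n => [//|m] _; rewrite /harmonic_number.
elim: m => [|m IH]; first by rewrite big_nat1 invr1 subrr mulr0 ln1.
rewrite big_nat_recr //=.
move: IH; set H := \sum_(1 <= j < m.+2) _; set a : R := m.+1%:R => IH.
have a_ge1 : 1 <= a by rewrite ler1n.
have a_gt0 : 0 < a by lra.
have a_inv_gt0 : 0 < a^-1 by rewrite invr_gt0.
have -> : (m.+2%:R : R) = a * (1 + a^-1).
  by rewrite mulrDr mulr1 mulfV ?natr1 // /a pnatr_eq0.
rewrite lnM ?posrE ?addr_gt0 //; clearbody a H.
have ln_le : ln (1 + a^-1) <= a^-1 by apply: le_ln1Dx; lra.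
have inv_le : a^-1 <= 2 * (a * (1 + a^-1))^-1.
  rewrite -subr_ge0.
  have -> : 2 * (a * (1 + a^-1))^-1 - a^-1 = (a - 1) / (a * (a + 1)).
    by field; rewrite !lt0r_neq0 //; lra.
  by rewrite divr_ge0 ?mulr_ge0 //; lra.
lra.
Qed.

Lemma bloch_norm_f_n_ge (R : realType) (phi : R) n : (1 <= n)%N ->
  (harmonic_number R n - 1) / 4 <= bloch_norm (f_n phi n).
Proof.
move=> n_ge1.
set N : R := n%:R; set x := (2 * N)^-1; set r := 1 - x.
have N_ge1 : 1 <= N by rewrite ler1n.
have xN : x * N = 2^-1 by rewrite /x invfM -mulrA mulVf ?mulr1 // pnatr_eq0 -lt0n.
have x_gt0 : 0 < x by rewrite invr_gt0; lra.
have x_le1 : x <= 1 by nra.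
have neg_x_ge : -1 <= - x by lra.
have r_ge0 : 0 <= r by rewrite /r; nra.
have r_lt1 : r < 1 by rewrite /r; lra.
have := @bloch_norm_ge R (f_n phi n) (r%:C * cexpi phi)%C.
rewrite cmodM cmod_real cmod_cexpi mulr1 ger0_norm // => /(_ r_lt1) bound.
apply: le_trans bound.
rewrite deriv_f_n_horner cmodM cmod_cexpi mul1r cmod_real.
set S := \sum_(1 <= k < n.+1) _.
set T := \sum_(1 <= k < n.+1) (k%:R / (n.+1 - k)%:R : R).
have S_ge : T / 2 <= S.
  rewrite mulr_suml; apply: ler_sum_nat => k /andP[k_ge1 k_le_n].
  have r_pow : 2^-1 <= r ^+ k.-1.
    have k_le : (k.-1%:R : R) <= N by rewrite ler_nat; lia.
    have := bernoulli_ineq k.-1 neg_x_ge; rewrite -/r.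
    by have := ler_wpM2r (ltW x_gt0) k_le; nra.
  rewrite [leRHS]mulrAC ler_wpM2l ?divr_ge0 //.
have T_ge0 : 0 <= T by rewrite sumr_ge0 // => k _; rewrite divr_ge0.
have T_eq : T = (N + 1) * harmonic_number R n - N by rewrite /T sum_div_rev_nat natr1.
have H_ge0 : 0 <= harmonic_number R n by rewrite sumr_ge0 // => j _; rewrite invr_ge0.
rewrite ger0_norm; last by lra.
have one_sub_r2 : x <= 1 - r ^+ 2 by rewrite /r; nra.
have S_ge0 : 0 <= S by lra.
have xH_ge0 : 0 <= x * harmonic_number R n by rewrite mulr_ge0 // ltW.
have := ler_wpM2l (ltW x_gt0) S_ge; have := ler_wpM2r S_ge0 one_sub_r2.
rewrite T_eq; clearbody S T; nra.
Qed.

Theorem mainTheorem8 (R : realType) :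
  exists C0 : R, 0 < C0 /\
    forall (n : nat) (phi : R), (1 <= n)%N -> - pi <= phi <= pi ->
      ln (n%:R) / C0 <= bloch_norm (f_n phi n).
Proof.
exists 8; split=> // n phi n_ge1 _.
apply: le_trans _ (bloch_norm_f_n_ge phi n_ge1).
have := ln_le_harmonic_number R n_ge1; lra.
Qed.
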